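(* Let $(E,\|\cdot\|)$ be a Banach space over $\mathbb{K}$ and let $\mathcal{F}(\Omega)$ and $\mathcal{F}(\Omega,E)$ be $\varepsilon$-into-compatible. Let $(T^{E},T^{\mathbb{K}})$ be a consistent and strong family for $(\mathcal{F},E)$, $\nu\colon\omega\to(0,\infty)$ a weight, suppose $\mathcal{F}\nu(\Omega)$ is a Banach space whose closed unit ball is a compact subset of $\mathcal{F}(\Omega)$, and let $U\subset\omega$ be a set of uniqueness for $(T^{\mathbb{K}},\mathcal{F}\nu)$. If $(f_\iota)_{\iota\in I}$ is a net in $\mathcal{F}_\varepsilon\nu(\Omega,E)$ with $\sup_{\iota\in I}\sup_{x\in\omega}\|T^{E}(f_\iota)(x)\|\nu(x)<\infty$ such that $\lim_\iota T^{E}(f_\iota)(x)$ exists in $E$ for every $x\in U$, then there is $f\in\mathcal{F}_\varepsilon\nu(\Omega,E)$ such that $(f_\iota)_{\iota\in I}$ converges to $f$ in $\mathcal{F}(\Omega,E)$.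
   Context: $\mathbb{K}\in\{\mathbb{R},\mathbb{C}\}$; ''lcHs'' means locally convex Hausdorff space over $\mathbb{K}$. Framework: Let $\Omega,\omega$ be non-empty sets. For an lcHs $F$, $F'_\kappa$ is $F'$ with the topology of uniform convergence on absolutely convex compact subsets of $F$, and $F\varepsilon E:=L_e(F'_\kappa,E)$ is the space of continuous linear maps $F'_\kappa\to E$ with the topology of uniform convergence on equicontinuous subsets of $F'$. Let $\mathcal{F}(\Omega)\subset\mathbb{K}^\Omega$ and $\mathcal{F}(\Omega,E)\subset E^\Omega$ be linear subspaces carrying locally convex Hausdorff topologies with $\delta_x\in\mathcal{F}(\Omega)'$ for all $x\in\Omega$. Define $S\colon\mathcal{F}(\Omega)\varepsilon E\to E^\Omega$, $S(u)(x):=u(\delta_x)$. The spaces are $\varepsilon$-into-compatible if $S$ maps into $\mathcal{F}(\Omega,E)$ and is a linear topological isomorphism onto its range. Let $T^{\mathbb{K}}\colon\mathcal{F}(\Omega)\to\mathbb{K}^\omega$ and $T^{E}\colon\mathcal{F}(\Omega,E)\to E^\omega$ be linear and $T^{\mathbb{K}}_x:=\delta_x\circ T^{\mathbb{K}}$. $(T^E,T^{\mathbb{K}})$ is consistent for $(\mathcal{F},E)$ if for every $u\in\mathcal{F}(\Omega)\varepsilon E$ we have $S(u)\in\mathcal{F}(\Omega,E)$ and for all $x\in\omega$: $T^{\mathbb{K}}_x\in\mathcal{F}(\Omega)'$ and $T^{E}(S(u))(x)=u(T^{\mathbb{K}}_x)$. It is strong for $(\mathcal{F},E)$ if for all $e'\in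 E'$, $f\in\mathcal{F}(\Omega,E)$: $e'\circ f\in\mathcal{F}(\Omega)$ and $T^{\mathbb{K}}(e'\circ f)(x)=e'(T^E(f)(x))$ for all $x\in\omega$. For a weight $\nu\colon\omega\to(0,\infty)$ set $\mathcal{F}\nu(\Omega):=\{f\in\mathcal{F}(\Omega): |f|_{\mathcal{F}\nu}:=\sup_{x\in\omega}|T^{\mathbb{K}}(f)(x)|\nu(x)<\infty\}$ with this norm. Let $B_{\mathcal{F}\nu}$ be its closed unit ball, $B^{\circ\mathcal{F}'}_{\mathcal{F}\nu}:=\{y'\in\mathcal{F}(\Omega)':|y'(f)|\le1\ \forall f\in B_{\mathcal{F}\nu}\}$ and $\mathcal{F}_\varepsilon\nu(\Omega,E):=S(\{u\in\mathcal{F}(\Omega)\varepsilon E: u(B^{\circ\mathcal{F}'}_{\mathcal{F}\nu})\text{ is bounded in }E\})$. A set $U\subset\omega$ is a set of uniqueness for $(T^{\mathbb{K}},\mathcal{F}\nu)$ if every $f\in\mathcal{F}\nu(\Omega)$ with $T^{\mathbb{K}}(f)(x)=0$ for all $x\in U$ is $0$. *)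

From HB Require Import structures.
From mathcomp Require Import all_boot all_order all_algebra.
From mathcomp Require Import all_classical all_reals all_analysis.
From mathcomp Require Import complex.
Unset Printing Implicit Defensive.
Import Order.TTheory GRing.Theory Num.Theory.
Import numFieldNormedType.Exports.
Local Open Scope classical_set_scope.
Local Open Scope ring_scope.

Definition RorC (K : numFieldType) : Prop :=
  exists R : realType, K = (R : numFieldType) \/ K = (R[i] : numFieldType).

Definition directed_preorder (I : Type) (le : I -> I -> Prop) : Prop :=
  inhabited I /\ (forall i, le i i) /\
  (forall i j k, le i j -> le j k -> le i k) /\
  (forall i j, exists k, le i k /\ le j k).

Definition net_cvg (I : Type) (le : I -> I -> Prop) (T : topologicalType)
  (x : I -> T) (l : T) : Prop :=
  forall N, nbhs l N -> exists i0, forall i, le i0 i -> N (x i).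

Section Defs.
Context {K : numFieldType}.

Definition linear_into_Kfun (V : lmodType K) (A : Type) (j : V -> A -> K) :=
  forall a u v x, j (a *: u + v) x = a * j u x + j v x.
Definition linear_into_Efun (V : lmodType K) (E : lmodType K) (A : Type)
  (j : V -> A -> E) :=
  forall a u v x, j (a *: u + v) x = a *: j u x + j v x.

Definition dual_set (F : tvsType K) : set (F -> K) :=
  [set y | (forall a u v, y (a *: u + v) = a * y u + y v) /\ continuous (y : F -> K)].

Definition absconvex (F : tvsType K) (A : set F) : Prop :=
  forall (a b : K) u v, A u -> A v -> `|a| + `|b| <= 1 -> A (a *: u + b *: v).

Definition acc_family (F : tvsType K) : set F -> Prop :=
  fun A => compact A /\ absconvex F A.

(** F'_kappa : functionals on F with the topology of uniform convergence on
    absolutely convex compact subsets of F *)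
Definition dual_kappa (F : tvsType K) := {family acc_family F, F -> K}.

Definition equicont (F : tvsType K) (M : set (F -> K)) : Prop :=
  forall (f0 : F) (e : K), 0 < e ->
    \forall f \near f0, forall y, M y -> `|y f - y f0| < e.

Definition equicont_family (F : tvsType K) : set (dual_kappa F) -> Prop :=
  fun M => M `<=` dual_set F /\ equicont F M.

(** F eps E = L_e(F'_kappa, E): continuous linear maps F'_kappa -> E, with the
    topology of uniform convergence on equicontinuous subsets of F'.
    An element is represented by its (unique) extension by 0 outside F'. *)
Definition eps_type (F : tvsType K) (E : normedModType K) :=
  {family equicont_family F, dual_kappa F -> E}.

Definition eps_set (F : tvsType K) (E : normedModType K) : set (eps_type F E) :=
  [set u | (forall (a : K) (y1 y2 : dual_kappa F), dual_set F y1 -> dual_set F y2 ->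
             u (fun f => a * y1 f + y2 f) = a *: u y1 + u y2)
         /\ {within (dual_set F : set (dual_kappa F)), continuous (u : dual_kappa F -> E)}
         /\ (forall y, ~ dual_set F y -> u y = 0)].

Definition delta (F : tvsType K) (Om : Type) (jK : F -> Om -> K) (x : Om) : F -> K :=
  fun f => jK f x.

Definition Sop (F : tvsType K) (E : normedModType K) (Om : Type)
  (jK : F -> Om -> K) (u : eps_type F E) : Om -> E :=
  fun x => u (delta F Om jK x : dual_kappa F).

(** eps-into-compatibility: S maps into F(Omega,E) and is a topological
    isomorphism onto its range (linearity of S is automatic). *)
Definition eps_into_compatible (F : tvsType K) (E : normedModType K)
  (FE : tvsType K) (Om : Type) (jK : F -> Om -> K) (jE : FE -> Om -> E) : Prop :=
  (forall x, dual_set F (delta F Om jK x)) /\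
  exists SF : eps_type F E -> FE,
    (forall u, eps_set F E u -> jE (SF u) = Sop F E Om jK u) /\
    {within eps_set F E, continuous SF} /\
    exists SFinv : FE -> eps_type F E,
      (forall u, eps_set F E u -> SFinv (SF u) = u) /\
      {within SF @` eps_set F E, continuous SFinv}.

Definition consistent_family (F : tvsType K) (E : normedModType K)
  (FE : tvsType K) (Om om : Type) (jK : F -> Om -> K) (jE : FE -> Om -> E)
  (TE : FE -> om -> E) (TK : F -> om -> K) : Prop :=
  forall u, eps_set F E u ->
    exists g : FE, jE g = Sop F E Om jK u /\
      forall x : om, dual_set F (fun f => TK f x) /\
                     TE g x = u ((fun f => TK f x) : dual_kappa F).

Definition strong_family (F : tvsType K) (E : normedModType K)
  (FE : tvsType K) (Om om : Type) (jK : F -> Om -> K) (jE : FE -> Om -> E)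
  (TE : FE -> om -> E) (TK : F -> om -> K) : Prop :=
  forall (e' : E -> K), ((forall a v w, e' (a *: v + w) = a * e' v + e' w) /\ continuous e') ->
  forall g : FE, exists h : F, jK h = (fun x => e' (jE g x)) /\
     forall x : om, TK h x = e' (TE g x).

Definition Fnu_set (F : tvsType K) (om : Type) (TK : F -> om -> K)
  (nu : om -> K) : set F :=
  [set f | exists C : K, forall x, `|TK f x| * nu x <= C].

Definition Bnu (F : tvsType K) (om : Type) (TK : F -> om -> K)
  (nu : om -> K) : set F :=
  [set f | forall x, `|TK f x| * nu x <= 1].

Definition polar_Bnu (F : tvsType K) (om : Type) (TK : F -> om -> K)
  (nu : om -> K) : set (F -> K) :=
  [set y | dual_set F y /\ forall f, Bnu F om TK nu f -> `|y f| <= 1].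

Definition Fnu_banach (F : tvsType K) (om : Type) (TK : F -> om -> K)
  (nu : om -> K) : Prop :=
  (forall f, Fnu_set F om TK nu f -> (forall x, TK f x = 0) -> f = 0) /\
  (forall s : nat -> F, (forall n, Fnu_set F om TK nu (s n)) ->
     (forall e : K, 0 < e -> exists N, forall m n, (N <= m)%N -> (N <= n)%N ->
        forall x, `|TK (s n - s m) x| * nu x <= e) ->
     exists f, Fnu_set F om TK nu f /\
       forall e : K, 0 < e -> exists N, forall n, (N <= n)%N ->
        forall x, `|TK (s n - f) x| * nu x <= e).

Definition Feps_nu (F : tvsType K) (E : normedModType K) (FE : tvsType K)
  (Om om : Type) (jK : F -> Om -> K) (jE : FE -> Om -> E)
  (TK : F -> om -> K) (nu : om -> K) : set FE :=
  [set g | exists u : eps_type F E, eps_set F E u /\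
      (exists C : K, forall y, polar_Bnu F om TK nu y -> `|u (y : dual_kappa F)| <= C) /\
      jE g = Sop F E Om jK u].

Definition uniqueness_set (F : tvsType K) (om : Type) (TK : F -> om -> K)
  (nu : om -> K) (U : set om) : Prop :=
  forall f, Fnu_set F om TK nu f -> (forall x, U x -> TK f x = 0) -> f = 0.

End Defs.

From HB Require Import structures.
From mathcomp Require Import all_boot all_order all_algebra.
From mathcomp Require Import all_classical all_reals all_analysis.
From mathcomp Require Import finmap complex ring lra.
Import Order.TTheory GRing.Theory Num.Theory.
Import numFieldNormedType.Exports.
Local Open Scope classical_set_scope.
Local Open Scope ring_scope.

(* Write [f i = S (u i)] with [u i] in [F eps E].  Composing [u i] with a norming
   functional of [E] (Hahn-Banach) and using the strong family yields an element
   of [F nu] of norm at most [C := sup_i |f i|_nu], so [|u i y| <= C] for [y] in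
   the polar of the unit ball [B] of [F nu].  Since [B] is compact and [U] is a set
   of uniqueness, finitely many evaluations at points of [U] control a
   neighbourhood of [0] in [B]; convergence of [TE (f i)] on [U] thus makes
   [(u i)] uniformly Cauchy on equicontinuous subsets of [F'].  Its limit [u] lies
   in [F eps E], is bounded on the polar of [B], and [u i --> u] in [F eps E]; the
   continuity of [S] gives [f i --> S u]. *)

(** * Hahn-Banach and norming functionals *)

Section HahnBanach.
Local Set Implicit Arguments.
Local Unset Strict Implicit.
(* [V] is a real vector space for the action [sc], which need not be the
   canonical scaling of [V]: complex spaces are used by restriction of scalars. *)
Variables (R : realType) (V : zmodType) (sc : R -> V -> V).
Hypothesis scDr : forall a x y, sc a (x + y) = sc a x + sc a y.
Hypothesis scDl : forall a b x, sc (a + b) x = sc a x + sc b x.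
Hypothesis scA : forall a b x, sc a (sc b x) = sc (a * b) x.
Hypothesis sc1 : forall x, sc 1 x = x.
Variable p : V -> R.
Hypothesis pD : forall x y, p (x + y) <= p x + p y.
Hypothesis pZ : forall a x, p (sc a x) = `|a| * p x.

Let sc0 x : sc 0 x = 0.
Proof. by apply: (@addrI _ (sc 0 x)); rewrite -scDl !addr0. Qed.

Let scNl a x : sc (- a) x = - sc a x.
Proof. by apply: (@addrI _ (sc a x)); rewrite -scDl !subrr sc0. Qed.

Let scN1 x : sc (-1) x = - x.
Proof. by rewrite scNl sc1. Qed.

Let scBr a x y : sc a (x - y) = sc a x - sc a y.
Proof. by rewrite scDr -scN1 scA mulrN1 scNl. Qed.

Let p0 : p 0 = 0.
Proof. by rewrite -(sc0 0) pZ normr0 mul0r. Qed.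

Let p_ge0 x : 0 <= p x.
Proof.
have := pD x (- x); rewrite subrr p0 -scN1 pZ normrN normr1 mul1r => h.
by rewrite -(pmulr_lge0 _ (ltr0n _ 2)) mulr_natr mulr2n.
Qed.

(* Graphs of [p]-dominated linear functionals defined on subspaces of [V];
   Zorn's lemma is applied to these graphs, ordered by inclusion. *)
Definition dominated_graph (G : set (V * R)) :=
  [/\ G (0, 0),
      (forall a x s y t, G (x, s) -> G (y, t) -> G (sc a x + y, a * s + t)),
      (forall x s t, G (x, s) -> G (x, t) -> s = t) &
      (forall x s, G (x, s) -> s <= p x)].

Lemma dominated_graphZ G k x s : dominated_graph G -> G (x, s) -> G (sc k x, k * s).
Proof. by case=> G00 GD _ _ Gxs; have := GD k x s 0 0 Gxs G00; rewrite !addr0. Qed.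

Definition extend_graph (G : set (V * R)) (w : V) (c : R) : set (V * R) :=
  [set z | exists x s a, G (x, s) /\ z = (x + sc a w, s + a * c)].

(* The admissible values [c] of the extension at [w] separate
   [s - p (x - w)] from [p (y + w) - t]; the supremum of the former works. *)
Lemma extension_constant G w : dominated_graph G -> exists c,
  (forall x s, G (x, s) -> s - p (x - w) <= c) /\
  (forall y t, G (y, t) -> c <= p (y + w) - t).
Proof.
case=> G00 GD _ Gp.
have sep x s y t : G (x, s) -> G (y, t) -> s - p (x - w) <= p (y + w) - t.
  move=> Gxs Gyt; have := Gp _ _ (GD 1 x s y t Gxs Gyt); rewrite sc1 mul1r.
  have := pD (x - w) (y + w); rewrite addrACA addNr addr0; lra.
pose S := [set r | exists x s, G (x, s) /\ r = s - p (x - w)].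
have supS : has_sup S.
  split; first by exists (0 - p (0 - w)), 0, 0.
  by exists (p (0 + w) - 0) => r [x [s [Gxs ->]]]; exact: sep.
exists (sup S); split => [x s Gxs|y t Gyt].
  by apply: sup_upper_bound => //; exists x, s.
by apply: ge_sup; [case: supS | move=> r [x [s [Gxs ->]]]; exact: sep].
Qed.

Lemma extend_graph_dominated G w c : dominated_graph G ->
  (forall x s, G (x, s) -> s - p (x - w) <= c) ->
  (forall y t, G (y, t) -> c <= p (y + w) - t) ->
  forall x s, extend_graph G w c (x, s) -> s <= p x.
Proof.
move=> dG cge cle _ _ [x [s [a [Gxs [-> ->]]]]]; have [_ _ _ Gp] := dG.
have [a0|a0|->] := ltgtP a 0; last by rewrite sc0 addr0 mul0r addr0; exact: Gp.
- have := cge _ _ (dominated_graphZ (- a^-1) dG Gxs).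
  have na0 : 0 <= - a by rewrite oppr_ge0 ltW.
  have e1 : - a * (- a^-1 * s) = s by rewrite mulrA mulrNN mulfV ?lt_eqF ?mul1r.
  have e2 : - a * p (sc (- a^-1) x - w) = p (x + sc a w).
    rewrite -[- a]ger0_norm // -pZ scBr scA mulrNN mulfV ?lt_eqF // sc1.
    by rewrite scNl opprK.
  by move=> /(ler_wpM2l na0); rewrite mulrBr e1 e2; lra.
- have := cle _ _ (dominated_graphZ a^-1 dG Gxs).
  have e1 : a * (a^-1 * s) = s by rewrite mulrA mulfV ?gt_eqF ?mul1r.
  have e2 : a * p (sc a^-1 x + w) = p (x + sc a w).
    by rewrite -{1}[a]ger0_norm ?ltW // -pZ scDr scA mulfV ?gt_eqF // sc1.
  by move=> /(ler_wpM2l (ltW a0)); rewrite mulrBr e1 e2; lra.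
Qed.

Lemma dominated_graph_extend G w c : dominated_graph G -> ~ (exists s, G (w, s)) ->
  (forall x s, G (x, s) -> s - p (x - w) <= c) ->
  (forall y t, G (y, t) -> c <= p (y + w) - t) ->
  dominated_graph (extend_graph G w c).
Proof.
move=> dG Gw cge cle; have [G00 GD Gfun _] := dG; split.
- by exists 0, 0, 0; rewrite sc0 addr0 mul0r addr0.
- move=> a _ _ _ _ [x1 [s1 [a1 [G1 [-> ->]]]]] [x2 [s2 [a2 [G2 [-> ->]]]]].
  exists (sc a x1 + x2), (a * s1 + s2), (a * a1 + a2); split; first exact: GD.
  by congr pair; [rewrite scDr scA scDl addrACA | ring].
- move=> _ _ _ [x1 [s1 [a1 [G1 [-> ->]]]]] [x2 [s2 [a2 [G2 [e ->]]]]].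
  have [ea|nea] := eqVneq a1 a2.
    by move: e G2; rewrite ea => /addIr <- G2; rewrite (Gfun _ _ _ G1 G2).
  (* otherwise [w] would be a multiple of [x2 - x1], hence in the domain *)
  exfalso; apply: Gw; exists ((a1 - a2)^-1 * (-1 * s1 + s2)).
  have -> : w = sc (a1 - a2)^-1 (sc (-1) x1 + x2).
    have -> : sc (-1) x1 + x2 = sc (a1 - a2) w.
      have -> : x2 = x1 + sc a1 w - sc a2 w by rewrite e addrK.
      by rewrite scN1 scDl scNl addrA addKr.
    by rewrite scA mulVf ?subr_eq0 // sc1.
  by apply: dominated_graphZ => //; apply: GD.
- exact: extend_graph_dominated.
Qed.

Definition line_graph v0 : set (V * R) := [set z | exists a, z = (sc a v0, a * p v0)].

Lemma dominated_line_graph v0 : dominated_graph (line_graph v0).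
Proof.
split.
- by exists 0; rewrite sc0 mul0r.
- move=> a _ _ _ _ [a1 [-> ->]] [a2 [-> ->]]; exists (a * a1 + a2).
  by rewrite scA scDl mulrDl mulrA.
- move=> _ _ _ [a1 [-> ->]] [a2 [e ->]].
  have [->//|ne] := eqVneq a1 a2.
  have : p (sc (a1 - a2) v0) = 0 by rewrite scDl scNl e subrr p0.
  rewrite pZ => /eqP; rewrite mulf_eq0 normr_eq0 subr_eq0 (negbTE ne) /=.
  by move=> /eqP ->; rewrite !mulr0.
- move=> _ _ [a [-> ->]]; rewrite pZ; apply: ler_wpM2r; [exact: p_ge0 | exact: ler_norm].
Qed.

Lemma dominated_graph_chain v0 (F : set (set (V * R))) :
  F `<=` [set G | dominated_graph (line_graph v0 `|` G)] -> total_on F subset ->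
  dominated_graph (line_graph v0 `|` \bigcup_(G in F) G).
Proof.
move=> FP Ftot; set L := line_graph v0.
have common z1 z2 : (L `|` \bigcup_(G in F) G) z1 -> (L `|` \bigcup_(G in F) G) z2 ->
    exists H, [/\ dominated_graph H, H `<=` L `|` \bigcup_(G in F) G, H z1 & H z2].
  have sub G : F G -> L `|` G `<=` L `|` \bigcup_(G in F) G.
    by move=> FG z [?|?]; [left | right; exists G].
  move=> [L1|[G1 FG1 G1z]] [L2|[G2 FG2 G2z]].
  - by exists L; split; [exact: dominated_line_graph | move=> z; left | | ].
  - by exists (L `|` G2); split; [exact: FP | exact: sub | left | right].
  - by exists (L `|` G1); split; [exact: FP | exact: sub | right | left].
  - have [S12|S21] := Ftot _ _ FG1 FG2.
    + by exists (L `|` G2); split; [exact: FP | exact: sub | right; apply: S12 | right].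
    + by exists (L `|` G1); split; [exact: FP | exact: sub | right | right; apply: S21].
split.
- by left; exists 0; rewrite sc0 mul0r.
- move=> a x s y t h1 h2; have [H [[_ HD _ _] sH H1 H2]] := common _ _ h1 h2.
  exact/sH/HD.
- move=> x s t h1 h2; have [H [[_ _ Hfun _] _ H1 H2]] := common _ _ h1 h2.
  exact: Hfun H1 H2.
- move=> x s h1; have [H [[_ _ _ Hp] _ H1 _]] := common _ _ h1 h1.
  exact: Hp.
Qed.

Theorem hahn_banach_line v0 : exists phi : V -> R,
  [/\ (forall a x y, phi (sc a x + y) = a * phi x + phi y),
      (forall x, phi x <= p x) & phi v0 = p v0].
Proof.
set L := line_graph v0.
have [A [dA Amax]] := Zorn_bigcup (@dominated_graph_chain v0).
have total w : exists s, (L `|` A) (w, s).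
  apply: contrapT => Aw.
  have [c [cge cle]] := extension_constant w dA.
  have dE := dominated_graph_extend dA Aw cge cle.
  have AE : L `|` A `<=` extend_graph (L `|` A) w c.
    by move=> [x s] Axs; exists x, s, 0; rewrite sc0 addr0 mul0r addr0.
  apply: (Amax (extend_graph (L `|` A) w c)); last first.
    by rewrite /= (setUidPr _ _).2 // => z Lz; apply: AE; left.
  split; first by move=> z Az; apply: AE; right.
  move=> EA; apply: Aw; exists c.
  have : extend_graph (L `|` A) w c (w, c).
    by exists 0, 0, 1; split; [case: dA | rewrite sc1 add0r mul1r add0r].
  by move/EA; right.
pose phi x := projT1 (cid (total x)).
have phiP x : (L `|` A) (x, phi x) by rewrite /phi; case: cid.
have [_ AD Afun Ap] := dA.
exists phi; split.
- by move=> a x y; apply: (Afun (sc a x + y)); [exact: phiP | apply: AD; exact: phiP].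
- by move=> x; apply: Ap; exact: phiP.
- by apply: (Afun v0); [exact: phiP | left; exists 1; rewrite sc1 mul1r].
Qed.

End HahnBanach.

Section ScalarLinear.
Local Set Implicit Arguments.
Local Unset Strict Implicit.
Variables (K : numFieldType) (V : lmodType K).

Definition scalar_linear (g : V -> K) := forall a u v, g (a *: u + v) = a * g u + g v.

Variables (g : V -> K) (g_lin : scalar_linear g).

Lemma scalar_linear0 : g 0 = 0.
Proof. by apply: (@addrI _ (g 0)); rewrite addr0 -{1}(mul1r (g 0)) -g_lin scale1r addr0. Qed.

Lemma scalar_linearZ a u : g (a *: u) = a * g u.
Proof. by rewrite -[a *: u]addr0 g_lin scalar_linear0 addr0. Qed.

Lemma scalar_linearD u v : g (u + v) = g u + g v.
Proof. by rewrite -{1}[u]scale1r g_lin mul1r. Qed.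

Lemma scalar_linearB u v : g (u - v) = g u - g v.
Proof. by rewrite scalar_linearD -scaleN1r scalar_linearZ mulN1r. Qed.

End ScalarLinear.

Section NormingFunctionals.
Local Set Implicit Arguments.
Local Unset Strict Implicit.
Variables (K : numFieldType) (E : normedModType K).

Definition contractive_functional (e : E -> K) :=
  scalar_linear e /\ forall z, `|e z| <= `|z|.

Definition norming_functional (w : E) (e : E -> K) :=
  contractive_functional e /\ `|e w| = `|w|.

Lemma contractive_functional_continuous e : contractive_functional e -> continuous e.
Proof.
move=> [elin ebd] x; apply/cvgrPdist_lt => eps eps0.
near=> z; rewrite -scalar_linearB //; apply: le_lt_trans (ebd _) _.
by near: z; apply: cvgr_dist_lt.
Unshelve. all: by end_near.
Qed.

End NormingFunctionals.

Lemma norming_functional_real (R : realType) (E : normedModType R) (w : E) :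
  exists e : E -> R, norming_functional w e.
Proof.
have [psi [psi_lin psi_le psi_w]] :=
  @hahn_banach_line R E (fun a x => a *: x) (fun a x y => scalerDr a x y)
    (fun a b x => scalerDl x a b) (fun a b x => scalerA a b x) (fun x => scale1r x)
    (fun x => `|x|) (fun x y => ler_normD x y) (fun a x => normrZ a x) w.
have psiN z : psi (- z) = - psi z.
  by rewrite -scaleN1r -[_ *: z]addr0 psi_lin (scalar_linear0 psi_lin) addr0 mulN1r.
exists psi; split; last by rewrite psi_w normr_id.
split => // z; rewrite ler_norml psi_le andbT lerNl -psiN -(normrN z).
exact: psi_le.
Qed.

Section ComplexNorming.
Local Set Implicit Arguments.
Local Unset Strict Implicit.
Variable R : realType.
Local Open Scope complex_scope.
Local Notation Re := complex.Re.

Let ReD (x y : R[i]) : Re (x + y) = Re x + Re y.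
Proof. by case: x; case: y. Qed.

Let Re_realM (r : R) (x : R[i]) : Re (r%:C * x) = r * Re x.
Proof. by case: x => a b /=; rewrite mul0r subr0. Qed.

Let Re_le (x y : R[i]) : x <= y -> Re x <= Re y.
Proof. by rewrite lecE => /andP[]. Qed.

Let ge0_complex_real (x : R[i]) : 0 <= x -> x = (Re x)%:C.
Proof. by move=> /ger0_Im; case: x => a b /= ->. Qed.

Let norm_real_complex (r : R) : `|r%:C| = `|r|%:C :> R[i].
Proof. by rewrite /Num.norm /= expr0n /= addr0 sqrtr_sqr. Qed.

Let Re_le_norm (x : R[i]) : Re x <= Re `|x|.
Proof. exact: le_trans (ler_norm _) (Re_le (normc_ge_Re x)). Qed.

Lemma complexify_functional (E : lmodType R[i]) (psi : E -> R) :
  (forall r x y, psi (r%:C *: x + y) = r * psi x + psi y) ->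
  exists phi : E -> R[i], scalar_linear phi /\ forall x, Re (phi x) = psi x.
Proof.
move=> psi_lin.
have psiD x y : psi (x + y) = psi x + psi y.
  by have := psi_lin 1 x y; rewrite rmorph1 scale1r mul1r.
have psi0 : psi 0 = 0 by apply: (@addrI _ (psi 0)); rewrite -psiD !addr0.
have psiZ r x : psi (r%:C *: x) = r * psi x.
  by have := psi_lin r x 0; rewrite !addr0 psi0 addr0.
have psiN x : psi (- x) = - psi x.
  by rewrite -scaleN1r -(rmorph1 (real_complex R)) -rmorphN psiZ mulN1r.
(* the only candidate: [Re (phi x) = psi x] and [Im (phi x) = - Re (phi ('i x))] *)
pose phi x := (psi x)%:C - 'i * (psi ('i *: x))%:C.
have phiD x y : phi (x + y) = phi x + phi y.
  by rewrite /phi scalerDr !psiD !rmorphD; ring.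
have phiR r x : phi (r%:C *: x) = r%:C * phi x.
  rewrite /phi (psiZ r x) scalerA [_ * r%:C]mulrC -scalerA (psiZ r ('i *: x)).
  by rewrite !rmorphM; ring.
have phiI x : phi ('i *: x) = 'i * phi x.
  rewrite /phi scalerA -expr2 sqr_i scaleN1r psiN rmorphN.
  by rewrite mulrBr mulrA -expr2 sqr_i; ring.
exists phi; split; last by move=> x; rewrite /phi /=; ring.
move=> a x y; rewrite phiD; congr (_ + _).
by rewrite [a]complexE scalerDl -scalerA phiD phiR phiI phiR mulrDl mulrA.
Qed.

(* Rotating [z] by the phase of [phi z] makes [phi z] real and nonnegative. *)
Lemma Re_bounded_contractive (E : normedModType R[i]) (phi : E -> R[i]) :
  scalar_linear phi -> (forall x, Re (phi x) <= Re `|x|) -> contractive_functional phi.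
Proof.
move=> phi_lin phi_le; split => // z.
have [->|nz] := eqVneq (phi z) 0; first by rewrite normr0.
pose c := `|phi z| / phi z.
have e1 : phi (c *: z) = `|phi z| by rewrite scalar_linearZ // /c mulfVK.
have nc : `|c| = 1 by rewrite /c normf_div normr_id divff // normr_eq0.
have := phi_le (c *: z); rewrite e1 normrZ nc mul1r.
by rewrite (ge0_complex_real (normr_ge0 (phi z))) (ge0_complex_real (normr_ge0 z)) lecR.
Qed.

Lemma norming_functional_complex (E : normedModType R[i]) (w : E) :
  exists e : E -> R[i], norming_functional w e.
Proof.
pose sc (r : R) (x : E) := r%:C *: x.
have scDr a x y : sc a (x + y) = sc a x + sc a y by exact: scalerDr.
have scDl a b x : sc (a + b) x = sc a x + sc b x by rewrite /sc rmorphD scalerDl.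
have scA a b x : sc a (sc b x) = sc (a * b) x by rewrite /sc scalerA rmorphM.
have sc1 x : sc 1 x = x by rewrite /sc rmorph1 scale1r.
have pD (x y : E) : Re `|x + y| <= Re `|x| + Re `|y|.
  by rewrite -ReD; apply/Re_le/ler_normD.
have pZ a (x : E) : Re `|sc a x| = `|a| * Re `|x|.
  by rewrite /sc normrZ norm_real_complex Re_realM.
have [psi [psi_lin psi_le psi_w]] := hahn_banach_line scDr scDl scA sc1 pD pZ w.
have [phi [phi_lin Re_phi]] := complexify_functional psi_lin.
have phi_contr : contractive_functional phi.
  by apply: Re_bounded_contractive => // x; rewrite Re_phi.
exists phi; split => //; apply/eqP; rewrite eq_le phi_contr.2 /=.
rewrite (ge0_complex_real (normr_ge0 w)) (ge0_complex_real (normr_ge0 (phi w))) lecR.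
by rewrite -psi_w -Re_phi; exact: Re_le_norm.
Qed.

End ComplexNorming.

Lemma RorC_norming_functional {K : numFieldType} : RorC K ->
  forall (E : normedModType K) (w : E), exists e : E -> K, norming_functional w e.
Proof.
case=> R [->|->]; [exact: norming_functional_real | exact: norming_functional_complex].
Qed.

(** * Nets and dual spaces *)

Section NetFilter.
Local Set Implicit Arguments.
Local Unset Strict Implicit.
Variables (I : Type) (le : I -> I -> Prop).

Definition net_filter : set_system I := filter_from [set: I] (fun i0 => [set i | le i0 i]).

Lemma net_filterP (P : set I) : net_filter P <-> exists i0, forall i, le i0 i -> P i.
Proof. by split=> [[i0 _ Pi0]|[i0 Pi0]]; exists i0. Qed.

Hypothesis le_dir : directed_preorder I le.

Lemma net_filter_proper : ProperFilter net_filter.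
Proof.
have [[i0] [le_refl [le_trans le_up]]] := le_dir.
apply: filter_from_proper; last by move=> i _; exists i; exact: le_refl.
apply: filter_from_filter; first by exists i0.
move=> i j _ _; have [k [ik jk]] := le_up i j.
by exists k => // l /= kl; split; apply: le_trans kl.
Qed.

Lemma net_cvgE (T : topologicalType) (x : I -> T) (l : T) :
  net_cvg I le T x l <-> x @ net_filter --> l.
Proof.
split=> [xl N /xl [i0 Ni0]|xl N /xl]; first by exists i0.
by move/net_filterP.
Qed.

End NetFilter.
Arguments net_filterP {I le P}.
Arguments net_cvgE {I le T x l}.

Lemma open_norm_gt {K : numFieldType} {T : topologicalType} (g : T -> K) (c : K) :
  continuous g -> open [set b | c < `|g b|].
Proof.
move=> g_cont; rewrite openE => b cb.
have r0 : 0 < `|g b| - c by rewrite subr_gt0.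
rewrite /interior; near=> b'.
have : `|g b - g b'| < `|g b| - c by near: b'; exact: cvgr_dist_lt _ _ (g_cont b) _ r0.
by move=> /(le_lt_trans (lerB_dist _ _)); rewrite ltrD2l ltrN2.
Unshelve. all: by end_near.
Qed.

Lemma equicont_set1 {K : numFieldType} {F : tvsType K} {y : F -> K} :
  dual_set F y -> equicont F [set y].
Proof.
move=> [_ y_cont] b0 r r0; near=> b => _ ->.
by rewrite distrC; near: b; exact: cvgr_dist_lt _ _ (y_cont b0) _ r0.
Unshelve. all: by end_near.
Qed.

Lemma lim_dist_le {K : numFieldType} {E : normedModType K} {T : Type}
    {F : set_system T} {FF : ProperFilter F} (g : T -> E) (l a : E) (c : K) :
  g @ F --> l -> F [set t | `|a - g t| <= c] -> `|a - l| <= c.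
Proof.
move=> gl gc; have [t0 ct0] := filter_ex gc.
have c0 : 0 <= c := le_trans (normr_ge0 _) ct0.
rewrite real_leNgt ?normr_real ?ger0_real //; apply/negP => cl.
have r0 : 0 < `|a - l| - c by rewrite subr_gt0.
have [t [ct lt]] := filter_ex (filterI gc (cvgr_dist_lt _ _ gl _ r0)).
rewrite distrC in lt; have := le_lt_trans (ler_distD (g t) a l) (ler_ltD ct lt).
by rewrite [c + _]addrC subrK ltxx.
Qed.

(** * Limits of bounded nets in [F eps E] *)

Section WeightedNetLimit.
Local Set Implicit Arguments.
Local Unset Strict Implicit.
Variables (K : numFieldType) (E : completeNormedModType K) (Om om : Type).
Variables (FK : tvsType K) (jK : FK -> Om -> K) (FE : tvsType K) (jE : FE -> Om -> E).
Hypothesis jK_lin : linear_into_Kfun FK Om jK.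
Hypothesis jK_inj : injective jK.
Hypothesis jE_inj : injective jE.
Hypothesis compat : eps_into_compatible FK E FE Om jK jE.
Variables (TK : FK -> om -> K) (TE : FE -> om -> E).
Hypothesis TK_lin : linear_into_Kfun FK om TK.
Hypothesis consistent : consistent_family FK E FE Om om jK jE TE TK.
Hypothesis strong : strong_family FK E FE Om om jK jE TE TK.
Variable nu : om -> K.
Hypothesis nu_gt0 : forall x, 0 < nu x.
Hypothesis Bnu_compact : compact (Bnu FK om TK nu).

Local Notation dual := (dual_set FK).
Local Notation B := (Bnu FK om TK nu).
Local Notation eps := (eps_set FK E).
Local Notation Sop := (Sop FK E Om jK).

Let jK0 x : jK 0 x = 0.
Proof. exact: (scalar_linear0 (fun a u v => jK_lin a u v x)). Qed.

Let TK_scalar x : scalar_linear (fun h => TK h x) := fun a u v => TK_lin a u v x.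

Let TKZ a h x : TK (a *: h) x = a * TK h x.
Proof. exact: (scalar_linearZ (TK_scalar x)). Qed.

Let TKB h k x : TK (h - k) x = TK h x - TK k x.
Proof. exact: (scalar_linearB (TK_scalar x)). Qed.

Lemma dual_comb a y1 y2 : dual y1 -> dual y2 -> dual (fun h => a * y1 h + y2 h).
Proof.
move=> [y1_lin y1_cont] [y2_lin y2_cont]; split.
  by move=> b u v; rewrite y1_lin y2_lin; ring.
by move=> x; apply: cvgD; [apply: cvgMr; exact: y1_cont | exact: y2_cont].
Qed.

Lemma Bnu_acc : acc_family FK B.
Proof.
split=> // a b u v Bu Bv ab1 x; rewrite (scalar_linearD (TK_scalar x)) !TKZ.
apply: le_trans (_ : (`|a| * `|TK u x| + `|b| * `|TK v x|) * nu x <= _).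
  apply: ler_wpM2r; first exact: ltW.
  by apply: le_trans (ler_normD _ _) _; rewrite !normrM.
rewrite mulrDl -!mulrA; apply: le_trans ab1; apply: lerD.
  by rewrite -[X in _ <= X]mulr1; apply: ler_wpM2l => //; exact: Bu.
by rewrite -[X in _ <= X]mulr1; apply: ler_wpM2l => //; exact: Bv.
Qed.

Lemma Bnu_scale h c : 0 < c -> (forall x, `|TK h x| * nu x <= c) -> B (c^-1 *: h).
Proof.
move=> c0 hc x; rewrite TKZ normrM ger0_norm ?invr_ge0 ?(ltW c0) // -mulrA.
by rewrite ler_pdivrMl // mulr1.
Qed.

Lemma near_Bnu_uniform (y0 : dual_kappa FK) r : 0 < r ->
  \forall y \near y0, forall b, B b -> `|y0 b - y b| < r.
Proof.
move=> r0; have := fam_nbhs y0 (entourage_ball _ (PosNum r0)) Bnu_acc.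
by apply: filterS => y yB b /yB; rewrite -ball_normE.
Qed.

Lemma eval_cvg_dual h c (y0 : dual_kappa FK) : 0 < c -> dual y0 ->
  (forall x, `|TK h x| * nu x <= c) ->
  (fun y : dual_kappa FK => y h) @ within dual (nbhs y0) --> y0 h.
Proof.
move=> c0 dy0 hc; apply/cvgrPdist_lt => r r0.
have rc0 : 0 < r / c by rewrite divr_gt0.
near=> y.
have dy : dual y by near: y; exact: withinT.
have hy : forall b, B b -> `|y0 b - y b| < r / c.
  by near: y; apply: cvg_within; exact: near_Bnu_uniform.
have := hy _ (Bnu_scale c0 hc).
rewrite (scalar_linearZ dy0.1) (scalar_linearZ dy.1) -mulrBr normrM.
by rewrite gtr0_norm ?invr_gt0 // [_ * `|_|]mulrC ltr_pM2r ?invr_gt0.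
Unshelve. all: by end_near.
Qed.

Let eps0 : eps_type FK E := fun _ => 0.

Lemma eps_set0 : eps eps0.
Proof.
split; first by move=> *; rewrite /eps0 scaler0 addr0.
by split=> //; apply/subspace_continuousP => y _; exact: cvg_cst.
Qed.

Lemma Sop_inj u1 u2 : eps u1 -> eps u2 -> Sop u1 = Sop u2 -> u1 = u2.
Proof.
have [S [S_Sop [_ [Sinv [SinvK _]]]]] := compat.2.
move=> eu1 eu2 Su12; rewrite -(SinvK _ eu1) -(SinvK _ eu2); congr Sinv.
by apply: jE_inj; rewrite !S_Sop.
Qed.

Lemma dual_TK x : dual (fun h => TK h x).
Proof. by have [g [_ Tg]] := consistent eps_set0; case: (Tg x). Qed.

(* A scalar functional on [F'_kappa] which is linear and continuous on [F'] and
   vanishes on all point evaluations gives, times a nonzero vector, an element of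
   [F eps E] with the same image under [S] as [0]. *)
Lemma dual_functional_vanish (e1 : E) (v : dual_kappa FK -> K) : e1 != 0 ->
  (forall a y1 y2, dual y1 -> dual y2 -> v (fun h => a * y1 h + y2 h) = a * v y1 + v y2) ->
  {within (dual : set (dual_kappa FK)), continuous v} ->
  (forall x, v (delta FK Om jK x) = 0) -> forall y, dual y -> v y = 0.
Proof.
move=> e1_neq0 v_lin v_cont v_delta y dy.
pose u : eps_type FK E := fun y => if `[< dual y >] then v y *: e1 else 0.
have eu : eps u.
  split; [|split].
  - move=> a y1 y2 dy1 dy2.
    rewrite /u (asboolT (dual_comb a dy1 dy2)) !asboolT //.
    by rewrite (congr1 (fun c => c *: e1) (v_lin a y1 y2 dy1 dy2)) scalerDl scalerA.
  - apply/subspace_continuousP => y0 dy0.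
    have v_y0 : v @ within dual (nbhs y0) --> v y0.
      by move/subspace_continuousP : v_cont; apply.
    have vZ_y0 : (fun y => v y *: e1) @ within dual (nbhs y0) --> v y0 *: e1.
      exact: cvgZl v_y0.
    rewrite /from_subspace /u; cbv beta; rewrite asboolT //; apply: cvg_trans vZ_y0.
    apply: near_eq_cvg; near=> z.
    by rewrite asboolT //; near: z; exact: withinT.
  - by move=> y1 ndy1; rewrite /u asboolF.
have : u = eps0.
  apply: Sop_inj eu eps_set0 _; apply: funext => x.
  by rewrite /Sop /u /eps0 (asboolT (compat.1 x)) v_delta scale0r.
move/(congr1 (fun w : eps_type FK E => w y)); rewrite /u /eps0 asboolT // => /eqP.
by rewrite scaler_eq0 (negbTE e1_neq0) orbF => /eqP.
Unshelve. all: by end_near.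
Qed.

(* The strong family represents [e \o g] by some [h]; that [h] also represents
   [e \o u] on all of [F'] is the injectivity of [S]. *)
Lemma contractive_comp_rep e g u C : contractive_functional e -> eps u ->
  jE g = Sop u -> 0 < C -> (forall x, `|TE g x| * nu x <= C) ->
  exists h, [/\ forall y, dual y -> e (u y) = y h,
                forall x, TK h x = e (TE g x) &
                forall x, `|TK h x| * nu x <= C].
Proof.
move=> [e_lin e_le] eu gu C0 gC.
have e_cont := contractive_functional_continuous (conj e_lin e_le).
have [h [jh Th]] := strong (conj e_lin e_cont) g.
have hC x : `|TK h x| * nu x <= C.
  by rewrite Th; apply: le_trans (gC x); apply: ler_wpM2r; [exact/ltW | exact: e_le].
exists h; split=> // y dy.
have [[e1 e1_neq0]|E0] := pselect (exists e1 : E, e1 != 0); last first.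
  have z0 (z : E) : z = 0 by apply: contrapT => /eqP nz; apply: E0; exists z.
  have -> : h = 0.
    apply: jK_inj; apply: funext => x.
    by rewrite jh (z0 (jE g x)) (scalar_linear0 e_lin) jK0.
  by rewrite (scalar_linear0 dy.1) (z0 (u y)) (scalar_linear0 e_lin).
apply/eqP; rewrite -subr_eq0; apply/eqP; move: y dy.
apply: (@dual_functional_vanish e1 (fun y => e (u y) - y h)) => //.
- by move=> a y1 y2 dy1 dy2 /=; rewrite eu.1 // e_lin; ring.
- apply/subspace_continuousP => y0 dy0; apply: cvgB; last exact: eval_cvg_dual C0 dy0 hC.
  apply: continuous_cvg (e_cont _) _.
  by move/subspace_continuousP : eu.2.1; apply.
- by move=> x; rewrite /delta jh gu subrr.
Qed.

Hypothesis E_norming : forall w : E, exists e : E -> K, norming_functional w e.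

Lemma eps_norm_le g u C y t : eps u -> jE g = Sop u -> 0 < C ->
  (forall x, `|TE g x| * nu x <= C) -> dual y -> (forall b, B b -> `|y b| <= t) ->
  `|u y| <= C * t.
Proof.
move=> eu gu C0 gC dy yt.
have [e [e_contr e_uy]] := E_norming (u y).
have [h [h_rep _ hC]] := contractive_comp_rep e_contr eu gu C0 gC.
have yh : y h = C * y (C^-1 *: h).
  by rewrite (scalar_linearZ dy.1) mulrA mulfV ?gt_eqF ?mul1r.
rewrite -e_uy h_rep // yh normrM gtr0_norm //.
by apply: ler_wpM2l; [exact: ltW | exact/yt/Bnu_scale].
Qed.

Variable U : set om.
Hypothesis U_uniq : uniqueness_set FK om TK nu U.
Hypothesis om0 : inhabited om.
Variables (I : Type) (le : I -> I -> Prop).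
Hypothesis le_dir : directed_preorder I le.
Variable f : I -> FE.
Hypothesis f_Feps : forall i, Feps_nu FK E FE Om om jK jE TK nu (f i).
Hypothesis f_bounded : exists C, forall i x, `|TE (f i) x| * nu x <= C.
Hypothesis f_cvgU : forall x, U x -> exists l : E, net_cvg I le E (fun i => TE (f i) x) l.

Local Notation netF := (net_filter le).
#[local] Instance net_filter_proper_le : ProperFilter netF := net_filter_proper le_dir.

Let uf_ex i : exists u, eps u /\ jE (f i) = Sop u.
Proof. by have [u [eu [_ fu]]] := f_Feps i; exists u. Qed.

Let uf i : eps_type FK E := projT1 (cid (uf_ex i)).

Let uf_eps i : eps (uf i).
Proof. exact: (projT2 (cid (uf_ex i))).1. Qed.

Let f_uf i : jE (f i) = Sop (uf i).
Proof. exact: (projT2 (cid (uf_ex i))).2. Qed.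

Let C_ex : exists C, 0 < C /\ forall i x, `|TE (f i) x| * nu x <= C.
Proof.
have [C fC] := f_bounded; have [[i0] _] := le_dir; have [x0] := om0.
have C0 : 0 <= C by apply: le_trans (fC i0 x0); rewrite mulr_ge0 // ltW.
by exists (C + 1); split=> [|i x]; [rewrite ltr_wpDl | rewrite (le_trans (fC i x)) ?lerDl].
Qed.

Let C := projT1 (cid C_ex).

Let C_gt0 : 0 < C.
Proof. exact: (projT2 (cid C_ex)).1. Qed.

Let fC i x : `|TE (f i) x| * nu x <= C.
Proof. exact: (projT2 (cid C_ex)).2. Qed.

Lemma uf_norm_le i y t : dual y -> (forall b, B b -> `|y b| <= t) -> `|uf i y| <= C * t.
Proof. exact: eps_norm_le (uf_eps i) (f_uf i) C_gt0 (fC i). Qed.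

Lemma contractive_difference_rep e i j : contractive_functional e -> exists d, [/\ B d,
  forall y, dual y -> y d = (2 * C)^-1 * e (uf i y - uf j y) &
  forall x, TK d x = (2 * C)^-1 * e (TE (f i) x - TE (f j) x)].
Proof.
move=> e_contr; have e_lin := e_contr.1.
have [hi [hi_rep hi_T hi_C]] := contractive_comp_rep e_contr (uf_eps i) (f_uf i) C_gt0 (fC i).
have [hj [hj_rep hj_T hj_C]] := contractive_comp_rep e_contr (uf_eps j) (f_uf j) C_gt0 (fC j).
exists ((2 * C)^-1 *: (hi - hj)); split.
- apply: Bnu_scale; first by rewrite mulr_gt0.
  move=> x; rewrite TKB; apply: le_trans (_ : (`|TK hi x| + `|TK hj x|) * nu x <= _).
    by apply: ler_wpM2r; [exact: ltW | exact: ler_normB].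
  by rewrite mulrDl mulr_natl mulr2n; apply: lerD.
- move=> y dy; rewrite (scalar_linearZ dy.1) (scalar_linearB dy.1).
  by rewrite -hi_rep // -hj_rep // (scalar_linearB e_lin).
- by move=> x; rewrite TKZ TKB hi_T hj_T (scalar_linearB e_lin).
Qed.

Let xnz_ex : exists xnz : FK -> om,
  forall b, B b -> b != 0 -> U (xnz b) /\ TK b (xnz b) != 0.
Proof.
have [x0] := om0.
suff : forall b, exists x, B b -> b != 0 -> U x /\ TK b x != 0.
  by move/choice => [g gP]; exists g.
move=> b; have [[x bx]|nx] := pselect (exists x, U x /\ TK b x != 0); first by exists x.
exists x0 => Bb /eqP b_neq0; exfalso; apply: b_neq0; apply: U_uniq; first by exists 1.
by move=> x Ux; apply/eqP; case: eqP => // /eqP bx; case: nx; exists x.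
Qed.

Let xnz := projT1 (cid xnz_ex).

Let xnzP b : B b -> b != 0 -> U (xnz b) /\ TK b (xnz b) != 0.
Proof. exact: (projT2 (cid xnz_ex)). Qed.

(* [compact_cover] is stated for pointed spaces. *)
HB.instance Definition _ := isPointed.Build FK 0.

(* Each nonzero [b] of the compact ball has a neighbourhood on which
   [TK _ (xnz b)] stays away from [0]; together with [W] they cover [B]. *)
Lemma Bnu_finite_cover (W : set FK) : nbhs 0 W -> exists2 D : {fset FK},
  {subset D <= B} & forall b, B b -> W b \/
    exists2 k, k \in D & k != 0 /\ `|TK k (xnz k)| / 2 < `|TK b (xnz k)|.
Proof.
move=> W0.
pose O k := [set b | k != 0 /\ `|TK k (xnz k)| / 2 < `|TK b (xnz k)|] `|` W°.
have O_open k : B k -> open (O k).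
  move=> _; apply: openU; last exact: open_interior.
  have [->|k0] := eqVneq k 0.
    rewrite (_ : [set b | _] = set0); first exact: open0.
    by apply/seteqP; split=> // b [].
  rewrite (_ : [set b | _] = [set b | `|TK k (xnz k)| / 2 < `|TK b (xnz k)|]).
    exact/open_norm_gt/(dual_TK _).2.
  by apply/seteqP; split=> [b []|b] //.
have B_cover : B `<=` \bigcup_(k in B) O k.
  move=> b Bb; have [->|b0] := eqVneq b 0.
    exists 0; last by right.
    by move=> x; rewrite (scalar_linear0 (TK_scalar x)) normr0 mul0r.
  exists b => //; left; split=> //.
  have [_ bx] := xnzP Bb b0.
  by rewrite ltr_pdivrMr // ltr_pMr ?normr_gt0 // ltr1n.
have := Bnu_compact; rewrite compact_cover => /(_ _ B O O_open B_cover) [D DB D_cover].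
by exists D => // b /D_cover [k /= kD [kb|/interior_subset Wb]]; [right; exists k | left].
Qed.

Let lU x := lim ((fun i => TE (f i) x) @ netF).

Lemma TE_f_cvg x : U x -> (fun i => TE (f i) x) @ netF --> lU x.
Proof. by move=> Ux; have [l /net_cvgE fl] := f_cvgU Ux; rewrite /lU (cvg_lim _ fl). Qed.

(* If [uf i y] and [uf j y] were far apart, a norming functional would produce
   [d] in [B], outside the neighbourhood of [0] on which [M] is small, hence
   near some [k] of the finite cover; but [TK d] is small at the points of [U]
   attached to the cover. *)
Lemma uf_uniform_cauchy (M : set (dual_kappa FK)) : M `<=` dual -> equicont FK M ->
  forall r, 0 < r -> exists i0, forall i j, le i0 i -> le i0 j ->
    forall y, M y -> `|uf i y - uf j y| <= r.
Proof.
move=> Md Meq r r0.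
have C2 : 0 < 2 * C by rewrite mulr_gt0.
have r'0 : 0 < r / (2 * C) by rewrite divr_gt0.
have [D DB D_cover] := Bnu_finite_cover (Meq 0 _ r'0).
pose A k := [set i | k != 0 ->
  `|lU (xnz k) - TE (f i) (xnz k)| < C * `|TK k (xnz k)| / 2].
have A_near k : k \in D -> netF (A k).
  move=> kD; have [->|k0] := eqVneq k 0.
    by apply: (@nearW _ netF) => i; rewrite /A /= eqxx.
  have [Uk Tk] := xnzP (set_mem (DB _ kD)) k0.
  have rk : 0 < C * `|TK k (xnz k)| / 2 by rewrite divr_gt0 // mulr_gt0 // normr_gt0.
  by apply: filterS (cvgr_dist_lt _ _ (TE_f_cvg Uk) _ rk) => i ? _.
have [i0 i0_near] := net_filterP.1 (filter_bigI _ A_near).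
exists i0 => i j i0i i0j y My.
rewrite real_leNgt ?normr_real ?gtr0_real //; apply/negP => w_gt.
have [e [e_contr e_w]] := E_norming (uf i y - uf j y).
have [d [Bd yd Td]] := contractive_difference_rep i j e_contr.
have [Wd|[k kD [k0 dk]]] := D_cover d Bd.
  have := Wd y My; rewrite (scalar_linear0 (Md _ My).1) subr0 (yd _ (Md _ My)).
  rewrite normrM e_w gtr0_norm ?invr_gt0 // mulrC ltr_pM2r ?invr_gt0 //.
  by move/(lt_trans w_gt); rewrite ltxx.
set x := xnz k in dk.
have fij : `|TE (f i) x - TE (f j) x| < C * `|TK k x|.
  apply: le_lt_trans (_ : _ <= `|lU x - TE (f i) x| + `|lU x - TE (f j) x|) _.
    rewrite (_ : _ - _ = (lU x - TE (f j) x) - (lU x - TE (f i) x)).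
      by rewrite [X in _ <= X]addrC ler_normB.
    by rewrite [RHS]addrC opprB addrA subrK.
  by rewrite (splitr (C * _)); apply: ltrD; [exact: i0_near | exact: i0_near].
have : `|TK d x| < `|TK k x| / 2.
  rewrite Td normrM gtr0_norm ?invr_gt0 //.
  apply: le_lt_trans (ler_wpM2l _ (e_contr.2 _)) _; first by rewrite invr_ge0 ltW.
  apply: lt_le_trans (_ : _ < (2 * C)^-1 * (C * `|TK k x|)) _.
    by rewrite ltr_pM2l ?invr_gt0.
  by rewrite le_eqVlt; apply/orP; left; apply/eqP; field; rewrite gt_eqF.
by move/(lt_trans dk); rewrite ltxx.
Qed.

Lemma uf_cvg y : dual y -> cvg ((fun i => uf i y) @ netF).
Proof.
move=> dy; apply: cauchy_cvg; apply: cauchy_exP => r r0.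
have r2 : 0 < r / 2 by rewrite divr_gt0.
have y_dual : [set y] `<=` dual by move=> _ ->.
have [i0 i0_cauchy] := uf_uniform_cauchy y_dual (equicont_set1 dy) r2.
have [_ [le_refl _]] := le_dir.
exists (uf i0 y); exists i0 => // i /= i0i; rewrite -ball_normE /=.
apply: le_lt_trans (i0_cauchy i0 i (le_refl _) i0i y erefl) _.
by rewrite ltr_pdivrMr // ltr_pMr // ltr1n.
Qed.

Let ulim : eps_type FK E := fun y =>
  if `[< dual y >] then lim ((fun i => uf i y) @ netF) else 0.

Lemma uf_ulim y : dual y -> (fun i => uf i y) @ netF --> ulim y.
Proof. by move=> dy; rewrite /ulim asboolT //; exact: uf_cvg. Qed.

Lemma uf_ulim_uniform (M : set (dual_kappa FK)) : M `<=` dual -> equicont FK M ->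
  forall r, 0 < r -> exists i0, forall i, le i0 i -> forall y, M y -> `|uf i y - ulim y| <= r.
Proof.
move=> Md Meq r r0; have [i0 i0_cauchy] := uf_uniform_cauchy Md Meq r0.
exists i0 => i i0i y My; apply: lim_dist_le (uf_ulim (Md _ My)) _.
by apply/net_filterP; exists i0 => j i0j; exact: i0_cauchy.
Qed.

Lemma ulim_norm_le y t : dual y -> (forall b, B b -> `|y b| <= t) -> `|ulim y| <= C * t.
Proof.
move=> dy yt; rewrite -normrN -sub0r; apply: lim_dist_le (uf_ulim dy) _.
by apply: (@nearW _ netF) => i /=; rewrite sub0r normrN; exact: uf_norm_le.
Qed.

Lemma ulim_lin a y1 y2 : dual y1 -> dual y2 ->
  ulim (fun h => a * y1 h + y2 h) = a *: ulim y1 + ulim y2.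
Proof.
move=> dy1 dy2.
have uf_comb : (fun i => uf i (fun h => a * y1 h + y2 h)) @ netF --> a *: ulim y1 + ulim y2.
  rewrite (_ : (fun i => _) = (fun i => a *: uf i y1 + uf i y2)).
    by apply: cvgD; [apply: cvgZ; [exact: cvg_cst | exact: uf_ulim] | exact: uf_ulim].
  by apply: funext => i; exact: (uf_eps i).1.
exact: (cvg_unique (@norm_hausdorff _ E) (uf_ulim (dual_comb a dy1 dy2)) uf_comb).
Qed.

Lemma ulim_cont : {within (dual : set (dual_kappa FK)), continuous ulim}.
Proof.
apply/subspace_continuousP => y0 dy0; apply/cvgrPdist_lt => r r0.
have r' : 0 < r / (2 * C) by rewrite divr_gt0 // mulr_gt0.
near=> y.
have dy : dual y by near: y; exact: withinT.
have y0y : forall b, B b -> `|y0 b - y b| < r / (2 * C).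
  by near: y; apply: cvg_within; exact: near_Bnu_uniform.
have -> : ulim y0 - ulim y = ulim (fun h => -1 * y h + y0 h).
  by rewrite ulim_lin // scaleN1r addrC.
apply: le_lt_trans (ulim_norm_le (t := r / (2 * C)) (dual_comb (-1) dy dy0) _) _.
  by move=> b /y0y /ltW; rewrite mulN1r addrC.
rewrite (_ : C * _ = r / 2); last by field; rewrite gt_eqF.
by rewrite ltr_pdivrMr // ltr_pMr // ltr1n.
Unshelve. all: by end_near.
Qed.

Lemma ulim_eps : eps ulim.
Proof.
split; first exact: ulim_lin.
by split; [exact: ulim_cont | move=> y ndy; rewrite /ulim asboolF].
Qed.

Lemma uf_cvg_ulim : (uf : I -> eps_type FK E) @ netF --> ulim.
Proof.
apply/fam_cvgP => M [Md Meq] P /uniform_nbhs [Ent [entE sub]].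
move: entE; rewrite -entourage_from_ballE => -[r /= r0 rEnt].
have r2 : 0 < r / 2 by rewrite divr_gt0.
have [i0 i0_near] := uf_ulim_uniform Md Meq r2.
exists i0 => // i /= i0i; apply: sub => y My; apply: rEnt.
rewrite /= -ball_normE /= distrC; apply: le_lt_trans (i0_near i i0i y My) _.
by rewrite ltr_pdivrMr // ltr_pMr // ltr1n.
Qed.

Theorem weighted_net_limit :
  exists g : FE, Feps_nu FK E FE Om om jK jE TK nu g /\ net_cvg I le FE f g.
Proof.
have [S [S_Sop [S_cont _]]] := compat.2.
have f_S i : f i = S (uf i) by apply: jE_inj; rewrite S_Sop ?f_uf.
exists (S ulim); split.
  exists ulim; split; first exact: ulim_eps.
  split; last exact: S_Sop ulim_eps.
  by exists (C * 1) => y [dy yB]; apply: ulim_norm_le.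
move/subspace_continuousP : S_cont => /(_ ulim ulim_eps) S_cont.
move=> N /S_cont S_N.
have [i0 _ i0_N] := uf_cvg_ulim (S_N : nbhs ulim [set v | eps v -> N (S v)]).
by exists i0 => i i0i; rewrite f_S; exact: i0_N i i0i (uf_eps i).
Qed.

End WeightedNetLimit.

Theorem mainTheorem3
  (K : numFieldType) (HK : RorC K)
  (E : completeNormedModType K)
  (Om om : Type) (HOm : inhabited Om) (Hom : inhabited om)
  (FK : tvsType K) (hFK : hausdorff_space FK)
  (jK : FK -> Om -> K) (jK_lin : linear_into_Kfun FK Om jK)
  (jK_inj : injective jK)
  (FE : tvsType K) (hFE : hausdorff_space FE)
  (jE : FE -> Om -> E) (jE_lin : linear_into_Efun FE E Om jE)
  (jE_inj : injective jE)
  (Hcompat : eps_into_compatible FK E FE Om jK jE)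
  (TK : FK -> om -> K) (TK_lin : linear_into_Kfun FK om TK)
  (TE : FE -> om -> E) (TE_lin : linear_into_Efun FE E om TE)
  (Hcons : consistent_family FK E FE Om om jK jE TE TK)
  (Hstrong : strong_family FK E FE Om om jK jE TE TK)
  (nu : om -> K) (nu_pos : forall x, 0 < nu x)
  (Hbanach : Fnu_banach FK om TK nu)
  (Hball : compact (Bnu FK om TK nu))
  (U : set om) (HU : uniqueness_set FK om TK nu U)
  (I : Type) (le : I -> I -> Prop) (Hdir : directed_preorder I le)
  (f : I -> FE)
  (Hf : forall i, Feps_nu FK E FE Om om jK jE TK nu (f i))
  (Hbd : exists C : K, forall i x, `|TE (f i) x| * nu x <= C)
  (Hlim : forall x, U x -> exists l : E, net_cvg I le E (fun i => TE (f i) x) l) :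
  exists g : FE, Feps_nu FK E FE Om om jK jE TK nu g /\ net_cvg I le FE f g.
Proof.
apply: (weighted_net_limit jK_lin jK_inj jE_inj Hcompat TK_lin Hcons Hstrong nu_pos
  Hball _ HU Hom Hdir Hf Hbd Hlim).
exact: RorC_norming_functional.
Qed.
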